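(* Let $x,y\in\{0,1\}^\infty$ be independent sequences, both with randomness rate $\tau>0$; let $0<\sigma<\tau$, $0<\sigma'<\tau-\sigma$, $b=\lceil(1-\sigma)/\sigma'\rceil$, let $a$ be a positive integer, and let $t_0=0$, $t_1=a$, $t_i=b(t_1+\cdots+t_{i-1})$ for $i\ge2$. Let $\bar{x}_i=x(1:t_i)$ and $\bar{y}_i=y(1:t_i)$. Then there is a constant $c$ such that for all $i,j\ge1$: (a) $\big|K(\bar{y}_i\bar{x}_j)-\big(K(\bar{y}_i)+K(\bar{x}_j)\big)\big|\le c(i+j)$; (b) $\big|K(\bar{x}_i\bar{y}_j)-\big(K(\bar{x}_i)+K(\bar{y}_j)\big)\big|\le c(i+j)$.
   Context: $x(n_1:n_2)$ denotes bits $n_1$ through $n_2$ of $x$ (indexed from 1); juxtaposition is concatenation. $K(u)$ is plain Kolmogorov complexity with respect to a fixed universal machine. A sequence has randomness rate $\tau$ if $K(x(1:n))\ge\tau n$ for all but finitely many $n$. Sequences $x,y$ are independent if there is a constant $c_0$ with $K(x(1:n)y(1:m))\ge K(x(1:n))+K(y(1:m))-c_0(1+\log n+\log m)$ for all $n,m\ge1$. *)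

From Stdlib Require Import ClassicalEpsilon.
From mathcomp Require Import all_boot all_order all_algebra.
From mathcomp Require Import reals.
Set Implicit Arguments. Unset Strict Implicit. Unset Printing Implicit Defensive.

(* Model of computation: register (Minsky) machines over nat.             *)
Inductive instr : Type :=
| INC of nat
| DEC of nat & nat.

Definition program := seq instr.

Definition state := (nat * (nat -> nat))%type.

Definition upd (r : nat -> nat) (k v : nat) : nat -> nat :=
  fun i => if i == k then v else r i.

Definition step (p : program) (s : state) : state :=
  let: (pc, r) := s in
  match nth (INC 0) p pc with
  | INC k => (pc.+1, upd r k (r k).+1)
  | DEC k j => if r k is n.+1 then (pc.+1, upd r k n) else (j, r)
  end.

Fixpoint run (p : program) (fuel : nat) (s : state) : option (nat -> nat) :=
  if size p <= s.1 then Some s.2 else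
  match fuel with
  | 0 => None
  | n.+1 => run p n (step p s)
  end.

(* bijective binary coding of bit strings by naturals *)
Fixpoint code (s : seq bool) : nat :=
  match s with
  | [::] => 0
  | b :: s' => (code s').*2 + 1 + b
  end.

Definition init (w : seq bool) : state := (0, fun i => if i == 0 then code w else 0).

(* program e on input w halts with output v (input and output in register 0) *)
Definition outputs (e : program) (w v : seq bool) : Prop :=
  exists fuel r, run e fuel (init w) = Some r /\ r 0 = code v.

(* u is a universal (additively optimal) machine: for every machine e
   there is a constant c with K_u(v) <= K_e(v) + c for all v. *)
Definition universal (u : program) : Prop :=
  forall e : program, exists c : nat, forall w v : seq bool,
    outputs e w v -> exists q : seq bool, outputs u q v /\ size q <= size w + c.

Definition K (u : program) (v : seq bool) : nat :=
  epsilon (inhabits 0%N) (fun n : nat =>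
    (exists q, outputs u q v /\ size q = n) /\
    (forall q, outputs u q v -> n <= size q)).

(* Infinite sequences: x : nat -> bool, with paper's bit k stored at x (k-1). *)
Definition xpref (x : nat -> bool) (n : nat) : seq bool := mkseq x n.

Local Open Scope ring_scope.

Definition has_rate (R : realType) (u : program) (tau : R) (x : nat -> bool) : Prop :=
  exists N : nat, forall n : nat, (N <= n)%N -> tau * n%:R <= (K u (xpref x n))%:R.

Definition independent (u : program) (x y : nat -> bool) : Prop :=
  exists c0 : nat, forall n m : nat, (1 <= n)%N -> (1 <= m)%N ->
    (K u (xpref x n ++ xpref y m))%:Z >=
      (K u (xpref x n))%:Z + (K u (xpref y m))%:Z
      - (c0 * (1 + trunc_log 2 n + trunc_log 2 m))%:Z.

(** For a universal machine [u],
      K(s t) <= K(s) + K(t) + O(log (|s| + |t|))   and   K(t s) <= K(s t) + O(log (|s| + |t|)),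
    both witnessed by one register-machine program that reads self-delimited numbers [n]
    and [|p|] followed by [p] and [q], simulates [u] on [p] and on [q], and outputs the
    concatenation of the two results rotated by [n].  With the lower bound given by
    independence, |K(x(1:n) y(1:m)) - K(x(1:n)) - K(y(1:m))| = O(log (n + m)) in both orders,
    and [t i <= a (b + 1)^i] makes [log (t i) = O(i)]. *)

From mathcomp Require Import all_boot all_order all_algebra.
From mathcomp Require Import reals.
From mathcomp Require Import zify.
From HB Require Import structures.
From Stdlib Require Import FunctionalExtensionality ClassicalEpsilon Classical.
Set Implicit Arguments. Unset Strict Implicit. Unset Printing Implicit Defensive.

(** * Runs of register machines *)

Definition instr_eqb (i j : instr) :=
  match i, j with
  | INC a, INC b => a == b
  | DEC a c, DEC b d => (a == b) && (c == d)
  | _, _ => false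
  end.

Lemma instr_eqP : Equality.axiom instr_eqb.
Proof.
case=> [a|a c] [b|b d] /=; try by constructor.
- by apply: (iffP eqP) => [->|[]].
- by apply: (iffP andP) => [[/eqP -> /eqP ->]|[-> ->]].
Qed.

HB.instance Definition _ := hasDecEq.Build instr instr_eqP.

Inductive reach (p : program) : state -> state -> Prop :=
| reach_refl s : reach p s s
| reach_step s s' : s.1 < size p -> reach p (step p s) s' -> reach p s s'.

Lemma reach_trans p s1 s2 s3 : reach p s1 s2 -> reach p s2 s3 -> reach p s1 s3.
Proof. by elim=> // s s' hs _ IH /IH; apply: reach_step. Qed.

Definition exec (p : program) (x y : nat -> nat) :=
  exists pc, reach p (0, x) (pc, y) /\ size p <= pc.

Lemma reach_run p s s' : reach p s s' -> size p <= s'.1 ->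
  exists fuel, run p fuel s = Some s'.2.
Proof.
elim=> [[pc y] /= hs|s0 s1 hlt _ IH hs]; first by exists 0; rewrite /= hs.
by have [f hf] := IH hs; exists f.+1; rewrite /= leqNgt hlt.
Qed.

Lemma run_reach p fuel s y : run p fuel s = Some y ->
  exists pc, reach p s (pc, y) /\ size p <= pc.
Proof.
elim: fuel s => [|f IH] s /=; case: ifP => hs //.
- by case=> <-; exists s.1; split=> //; case: s {hs} => ? ?; apply: reach_refl.
- by case=> <-; exists s.1; split=> //; case: s {hs} => ? ?; apply: reach_refl.
- move=> /IH [pc [hr hpc]]; exists pc; split=> //.
  by apply: reach_step hr; rewrite ltnNge hs.
Qed.

Lemma exec_outputs e w v y : exec e (init w).2 y -> y 0 = code v -> outputs e w v.
Proof. by move=> [pc [hr hs]] hy; have [f hf] := reach_run hr hs; exists f, y. Qed.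

Lemma outputs_exec e w v :
  outputs e w v -> exists y, exec e (init w).2 y /\ y 0 = code v.
Proof.
by move=> [f [r [hrun hr]]]; have [pc [h1 h2]] := run_reach hrun; exists r; split=> //; exists pc.
Qed.

Lemma exec_eq P x y y' : exec P x y -> y = y' -> exec P x y'.
Proof. by move=> h <-. Qed.

(** * Sequential composition *)

Definition shift_instr (o : nat) (i : instr) :=
  match i with INC k => INC k | DEC k j => DEC k (j + o) end.
Definition shift o (p : program) := map (shift_instr o) p.
Definition pcat (p q : program) := p ++ shift (size p) q.

Lemma size_shift o p : size (shift o p) = size p.
Proof. by rewrite size_map. Qed.

Lemma step_shift A Q C pc x : pc < size Q ->
  step (A ++ shift (size A) Q ++ C) (size A + pc, x) =
  let: (pc', x') := step Q (pc, x) in (size A + pc', x').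
Proof.
move=> hpc; rewrite /step nth_cat ltnNge leq_addr /= addKn nth_cat size_shift hpc.
rewrite (nth_map (INC 0)) //; case: (nth (INC 0) Q pc) => [k|k j] /=.
- by rewrite addnS.
- by case: (x k) => [|n]; [rewrite addnC | rewrite addnS].
Qed.

Lemma reach_shift A Q C pc x pc' y : reach Q (pc, x) (pc', y) ->
  reach (A ++ shift (size A) Q ++ C) (size A + pc, x) (size A + pc', y).
Proof.
move=> h; move: h (erefl (pc, x)) (erefl (pc', y)).
move: {1 3}(pc, x) {1 3}(pc', y) => s s' h.
elim: h pc x pc' y => [s0|s0 s1 hlt _ IH] pc x pc' y E1 E2; subst.
- by case: E2 => -> ->; apply: reach_refl.
- apply: reach_step.
  + by move: hlt; rewrite /= !size_cat size_shift; lia.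
  + by rewrite step_shift //; case E: (step Q (pc, x)) => [a b]; apply: IH.
Qed.

Lemma reach_catr P C s s' : reach P s s' -> reach (P ++ C) s s'.
Proof.
elim=> [s0|[pc x] s1 /= hlt _ IH]; first exact: reach_refl.
apply: reach_step; first by rewrite size_cat ltn_addr.
by rewrite /step nth_cat hlt.
Qed.

(* Well-formed programs only jump inside the program or to its end, so a
   halting run ends exactly at [size p]. *)
Definition wf_instr n (i : instr) := match i with INC _ => true | DEC _ j => j <= n end.
Definition wf (p : program) := all (wf_instr (size p)) p.

Lemma step_wf p s : wf p -> s.1 < size p -> (step p s).1 <= size p.
Proof.
move=> /allP hw; case: s => pc x /= hpc; rewrite /step.
move: (hw _ (mem_nth (INC 0) hpc)).
by case: (nth (INC 0) p pc) => [k|k j] //= hj; case: (x k).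
Qed.

Lemma reach_wf p s s' : wf p -> s.1 <= size p -> reach p s s' -> s'.1 <= size p.
Proof. by move=> hw + h; elim: h => // s0 s1 hlt _ IH _; apply/IH/step_wf. Qed.

Lemma exec_wf p x y : wf p -> exec p x y -> reach p (0, x) (size p, y).
Proof.
move=> hw [pc [hr hpc]]; have /(_ (leq0n _)) /= hpc' := reach_wf hw _ hr.
by have -> : size p = pc by apply/eqP; rewrite eqn_leq hpc hpc'.
Qed.

Lemma exec_pcat P Q x y z : wf P -> exec P x y -> exec Q y z -> exec (pcat P Q) x z.
Proof.
move=> hw hP [pc [hr hpc]]; exists (size P + pc); split; last first.
  by rewrite /pcat size_cat size_shift leq_add2l.
apply: reach_trans (reach_catr _ (exec_wf hw hP)) _.
by have := @reach_shift P Q [::] 0 y pc z hr; rewrite cats0 addn0.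
Qed.

Lemma wf_pcat P Q : wf P -> wf Q -> wf (pcat P Q).
Proof.
move=> /allP hP /allP hQ; apply/allP => i.
rewrite /pcat mem_cat size_cat size_shift => /orP[hi|/mapP [i' hi' ->]].
- by move: (hP _ hi); case: i {hi} => //= k j; lia.
- by move: (hQ _ hi'); case: i' {hi'} => //= k j; lia.
Qed.

(* Register [zreg] is kept at 0, so that [DEC zreg j] is an unconditional jump. *)
Notation zreg := 1%N.

Definition instr_mods (i : instr) : seq nat :=
  match i with INC k => [:: k] | DEC k _ => if k == zreg then [::] else [:: k] end.
Definition mods (p : program) : seq nat := flatten (map instr_mods p).

Lemma upd_eq x k v : upd x k v k = v.
Proof. by rewrite /upd eqxx. Qed.

Lemma upd_neq x k v j : j != k -> upd x k v j = x j.
Proof. by rewrite /upd => /negbTE ->. Qed.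

Lemma step_frame p s z : s.1 < size p -> s.2 zreg = 0 -> z \notin mods p ->
  (step p s).2 z = s.2 z.
Proof.
case: s => pc x /= hpc hz hzm; rewrite /step.
have sub v : v \in instr_mods (nth (INC 0) p pc) -> v \in mods p.
  by move=> hv; apply/flattenP; exists (instr_mods (nth (INC 0) p pc)); rewrite ?map_f ?mem_nth.
case: (nth (INC 0) p pc) sub => [k|k j] sub /=.
  by apply: upd_neq; apply: contraNneq hzm => ->; apply: sub; rewrite inE.
case Ex: (x k) => [|n] //=; apply: upd_neq; apply: contraNneq hzm => ->; apply: sub => /=.
by case: eqP => [hk|_]; [move: hz; rewrite -hk Ex | rewrite inE].
Qed.

Lemma reach_frame p s s' : reach p s s' -> s.2 zreg = 0 -> zreg \notin mods p ->
  forall z, z \notin mods p -> s'.2 z = s.2 z.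
Proof. by elim=> // s0 s1 hlt _ IH hz hZ z hzm; rewrite IH ?step_frame. Qed.

Lemma exec_frame p x y : exec p x y -> x zreg = 0 -> zreg \notin mods p ->
  forall z, z \notin mods p -> y z = x z.
Proof. by move=> [pc [h _]]; apply: (reach_frame h). Qed.

(** * Loops and basic macros *)

Ltac upd_cases := rewrite /upd; repeat (case: eqP => ?); subst; try lia.
Ltac upd_funext := let z := fresh "z" in apply: functional_extensionality => z; upd_cases.

(* Distinctness of the registers used by a macro is stated as [uniq [:: ...; zreg]]. *)
Ltac split_uniq := match goal with H : is_true (uniq _) |- _ =>
  rewrite /= ?inE ?negb_or in H;
  repeat match goal with h : is_true (_ && _) |- _ =>
    let h1 := fresh "hneq" in let h2 := fresh "hneq" in case/andP: h => h1 h2 end end.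
Ltac neq_side := match goal with |- is_true (?a != ?b) =>
  first [done | assumption | rewrite eq_sym; assumption] end.
Ltac uniq_side := rewrite /= ?inE ?negb_or; repeat (apply/andP; split); try done; neq_side.

(* [while r body]: while register [r] is nonzero, decrement it (the leading
   [DEC r _; INC r] only tests it) and run [body]. *)
Definition while r body :=
  [:: DEC r (size body + 3); INC r] ++ shift 2 body ++ [:: DEC zreg 0].

Lemma wf_while r body : wf body -> wf (while r body).
Proof.
rewrite /wf /while => /allP hb; apply/allP => i.
rewrite !size_cat size_shift /= !inE mem_cat.
case/or3P=> [/eqP->|/eqP->|/orP [/mapP [i' hi ->]|]] //=; first lia.
- by move: (hb _ hi); case: i' {hi} => //= k j; lia.
- by rewrite inE => /eqP ->.
Qed.

Lemma while_rule r body (Inv : nat -> (nat -> nat) -> Prop) :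
  wf body -> r != zreg ->
  (forall n x, Inv n x -> x zreg = 0 -> x r != 0 ->
     exists m y, m < n /\ Inv m y /\ y zreg = 0 /\ exec body x y) ->
  forall n x, Inv n x -> x zreg = 0 ->
     exists m y, Inv m y /\ y r = 0 /\ y zreg = 0 /\ exec (while r body) x y.
Proof.
move=> hw hr hbody; elim/ltn_ind => n IH x hI hz.
case Ex: (x r) => [|k].
  exists n, x; do 3 split=> //; exists (size body + 3).
  split; last by rewrite /while !size_cat size_shift /=; lia.
  by apply: reach_step => //; rewrite /step /= Ex; apply: reach_refl.
have [m [y [hmn [hIy [hyz hex]]]]] := hbody n x hI hz ltac:(by rewrite Ex).
have [m' [w [hIw [hw1 [hw2 [pc [hr1 hr2]]]]]]] := IH m hmn y hIy hyz.
exists m', w; do 3 split=> //; exists pc; split=> //.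
apply: reach_step => //; rewrite /step /= Ex.
apply: reach_step => //; rewrite /step /=.
have -> : upd (upd x r k) r (upd x r k r).+1 = x by upd_funext.
apply: reach_trans (@reach_shift [:: DEC r (size body + 3); INC r] body [:: DEC zreg 0]
                     0 x (size body) y (exec_wf hw hex)) _.
apply: reach_step; first by rewrite /= /while !size_cat size_shift /=; lia.
by rewrite /step /while /= nth_cat size_shift add0n ltnn subnn /= hyz.
Qed.

Lemma exec_while_down a body (G : nat -> nat -> nat) N : wf body -> a != zreg ->
  (forall n, n <= N -> G n a = n) -> (forall n, n <= N -> G n zreg = 0) ->
  (forall n, n < N -> exec body (G n.+1) (G n)) -> exec (while a body) (G N) (G 0).
Proof.
move=> hw ha hGa hGz hb.
have [|m [y [[hm ->] [hy [_ hex]]]]] :=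
  @while_rule a body (fun m y => m <= N /\ y = G m) hw ha _ N (G N) (conj (leqnn N) erefl)
    (hGz _ (leqnn N)).
  move=> n y [hn ->] _; rewrite hGa // => hn0.
  exists n.-1, (G n.-1); split; first lia.
  split; first by split; first lia.
  split; first by rewrite hGz //; lia.
  by rewrite -{1}(prednK (_ : 0 < n)) ?lt0n //; apply: hb; lia.
by move: hy hex; rewrite hGa // => ->.
Qed.

Definition dec r : program := [:: DEC r 1].
Definition inc r : program := [:: INC r].

Lemma wf_dec r : wf (dec r). Proof. by []. Qed.
Lemma wf_inc r : wf (inc r). Proof. by []. Qed.

Lemma exec_dec r x : exec (dec r) x (upd x r (x r).-1).
Proof.
exists 1; split=> //; apply: reach_step => //; rewrite /step /=.
case E: (x r) => [|n] /=; last exact: reach_refl.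
have -> : upd x r 0 = x by upd_funext.
exact: reach_refl.
Qed.

Lemma exec_inc r x : exec (inc r) x (upd x r (x r).+1).
Proof. by exists 1; split=> //; apply: reach_step => //; apply: reach_refl. Qed.

Definition clr r := while r (dec r).
Definition mv a b := while a (pcat (dec a) (inc b)).
Definition mv2 a b c := while a (pcat (dec a) (pcat (inc b) (inc c))).
Definition dbl a b := while a (pcat (dec a) (pcat (inc b) (inc b))).

Lemma wf_clr r : wf (clr r). Proof. exact: wf_while. Qed.
Lemma wf_mv a b : wf (mv a b). Proof. by apply/wf_while/wf_pcat. Qed.
Lemma wf_mv2 a b c : wf (mv2 a b c). Proof. by apply/wf_while/wf_pcat/wf_pcat. Qed.
Lemma wf_dbl a b : wf (dbl a b). Proof. by apply/wf_while/wf_pcat/wf_pcat. Qed.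

Lemma exec_clr r x : r != zreg -> x zreg = 0 -> exec (clr r) x (upd x r 0).
Proof.
move=> hr hz; have := @exec_while_down r (dec r) (upd x r) (x r) (wf_dec r) hr.
have -> : upd x r (x r) = x by upd_funext.
apply=> n hn; first by rewrite upd_eq.
  by upd_cases.
by apply: exec_eq (exec_dec r _) _; upd_funext.
Qed.

Lemma exec_mv a b x : uniq [:: a; b; zreg] -> x zreg = 0 ->
  exec (mv a b) x (upd (upd x b (x b + x a)) a 0).
Proof.
move=> hab hz; split_uniq.
have := @exec_while_down a _ (fun n => upd (upd x b (x b + (x a - n))) a n) (x a)
  (wf_pcat (wf_dec _) (wf_inc _)) ltac:(neq_side).
have -> : upd (upd x b (x b + (x a - x a))) a (x a) = x by upd_funext.
rewrite subn0; apply=> n hn; first by rewrite upd_eq.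
  by upd_cases.
apply: exec_pcat (wf_dec _) (exec_dec _ _) _.
by apply: exec_eq (exec_inc _ _) _; upd_funext.
Qed.

Lemma exec_mv2 a b c x : uniq [:: a; b; c; zreg] -> x zreg = 0 ->
  exec (mv2 a b c) x (upd (upd (upd x b (x b + x a)) c (x c + x a)) a 0).
Proof.
move=> habc hz; split_uniq.
have := @exec_while_down a _
  (fun n => upd (upd (upd x b (x b + (x a - n))) c (x c + (x a - n))) a n) (x a)
  (wf_pcat (wf_dec _) (wf_pcat (wf_inc _) (wf_inc _))) ltac:(neq_side).
have -> : upd (upd (upd x b (x b + (x a - x a))) c (x c + (x a - x a))) a (x a) = x
  by upd_funext.
rewrite subn0; apply=> n hn; first by rewrite upd_eq.
  by upd_cases.
apply: exec_pcat (wf_dec _) (exec_dec _ _) _.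
apply: exec_pcat (wf_inc _) (exec_inc _ _) _.
by apply: exec_eq (exec_inc _ _) _; upd_funext.
Qed.

Lemma exec_dbl a b x : uniq [:: a; b; zreg] -> x zreg = 0 ->
  exec (dbl a b) x (upd (upd x b (x b + (x a).*2)) a 0).
Proof.
move=> hab hz; split_uniq.
have := @exec_while_down a _ (fun n => upd (upd x b (x b + (x a - n).*2)) a n) (x a)
  (wf_pcat (wf_dec _) (wf_pcat (wf_inc _) (wf_inc _))) ltac:(neq_side).
have -> : upd (upd x b (x b + (x a - x a).*2)) a (x a) = x by upd_funext.
rewrite subn0; apply=> n hn; first by rewrite upd_eq.
  by upd_cases.
apply: exec_pcat (wf_dec _) (exec_dec _ _) _.
apply: exec_pcat (wf_inc _) (exec_inc _ _) _.
by apply: exec_eq (exec_inc _ _) _; upd_funext.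
Qed.

Definition halve a b p : program := [:: DEC a 5; DEC a 4; INC b; DEC zreg 0; INC p].

Lemma wf_halve a b p : wf (halve a b p). Proof. by []. Qed.

Lemma exec_halve a b p x : uniq [:: a; b; p; zreg] -> x zreg = 0 ->
  exec (halve a b p) x (upd (upd (upd x b (x b + (x a)./2)) p (x p + odd (x a))) a 0).
Proof.
move=> habp; split_uniq.
suff: forall n x, x a = n -> x zreg = 0 ->
    exec (halve a b p) x (upd (upd (upd x b (x b + n./2)) p (x p + odd n)) a 0).
  by move=> h hz; apply: h.
elim/ltn_ind => n IH {}x Ea hz.
case: n IH Ea => [|[|n]] IH Ea.
- exists 5; split=> //; apply: reach_step => //; rewrite /step /= Ea.
  have -> : upd (upd (upd x b (x b + 0)) p (x p + 0)) a 0 = x by upd_funext.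
  exact: reach_refl.
- exists 5; split=> //; apply: reach_step => //; rewrite /step /= Ea.
  apply: reach_step => //; rewrite /step /= upd_eq.
  apply: reach_step => //; rewrite /step /=.
  have -> : upd (upd (upd x b (x b + 0)) p (x p + 1)) a 0 =
            upd (upd x a 0) p (upd x a 0 p).+1 by upd_funext.
  exact: reach_refl.
- have [x3 hx3] : exists x3,
      x3 = upd (upd (upd x a n.+1) a n) b ((upd (upd x a n.+1) a n b).+1) by eexists.
  have h3a : x3 a = n by rewrite hx3; upd_cases.
  have h3z : x3 zreg = 0 by rewrite hx3; upd_cases.
  have [pc [hr hs]] := IH n (ltnW (ltnSn _)) x3 h3a h3z.
  exists pc; split=> //.
  apply: reach_step => //; rewrite /step /= Ea.
  apply: reach_step => //; rewrite /step /= upd_eq.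
  apply: reach_step => //; rewrite /step /=.
  apply: reach_step => //; rewrite /step /= -hx3 h3z.
  have -> : upd (upd (upd x b (x b + n.+2./2)) p (x p + odd n.+2)) a 0 =
            upd (upd (upd x3 b (x3 b + n./2)) p (x3 p + odd n)) a 0.
    by rewrite hx3 /=; upd_funext.
  exact: hr.
Qed.

(** * Bit strings in registers *)

Lemma code_eq0 s : (code s == 0) = (s == [::]).
Proof. by case: s => //= b s; rewrite addn1 addSn. Qed.

Lemma code_cons_pred b s : (code (b :: s)).-1 = (code s).*2 + b.
Proof. by rewrite /= addn1 addSn. Qed.

Lemma odd_double_bit n (b : bool) : odd (n.*2 + b) = b.
Proof. by rewrite oddD odd_double; case: b. Qed.

Lemma half_double_bit n (b : bool) : (n.*2 + b)./2 = n.
Proof. by rewrite addnC half_bit_double. Qed.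

Lemma double_addn1_pred n m : (n.*2 + 1 + m).-1 = n.*2 + m.
Proof. by rewrite addn1 addSn. Qed.

Lemma odd_doubleD n m : odd (n.*2 + m) = odd m.
Proof. by rewrite oddD odd_double. Qed.

Lemma half_doubleD n m : (n.*2 + m)./2 = n + m./2.
Proof. by rewrite halfD odd_double /= doubleK. Qed.

Lemma catrev_rcons (t : seq bool) b d : catrev (rcons t b) d = b :: catrev t d.
Proof. by rewrite !catrevE rev_rcons. Qed.

#[global] Hint Resolve wf_pcat wf_clr wf_mv wf_mv2 wf_dbl wf_halve wf_dec wf_inc wf_while : wfdb.
Ltac wf_auto := auto 40 with wfdb.

Ltac upd_simpl := repeat match goal with
 | H : is_true (?a != ?b) |- context [?a == ?b] => rewrite (negbTE H)
 | H : is_true (?a != ?b) |- context [?b == ?a] => rewrite (eq_sym b a) (negbTE H)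
 | |- context [?a == ?a] => rewrite eqxx
 end; rewrite /=.
Ltac upd_funext_simpl := let z := fresh "z" in apply: functional_extensionality => z;
  unfold upd; upd_simpl;
  repeat (match goal with |- context [z == ?r] =>
            case: (z =P r) => [?|?]; try subst z; upd_simpl end);
  rewrite ?code_cons_pred ?half_double_bit ?odd_double_bit ?double_addn1_pred
          ?odd_doubleD ?half_doubleD /= ?addn0 ?subn0 ?add0n; try done.
Ltac upd_side := first [ uniq_side
  | unfold upd; upd_simpl; rewrite ?catrevE ?cats0 ?seq.revK; try done; try assumption ].
Tactic Notation "exec_seq" uconstr(L) :=
  eapply exec_pcat; [wf_auto | eapply L; upd_side | ].
Tactic Notation "exec_last" uconstr(L) := eapply exec_eq; [eapply L; upd_side | ].

(* A register holding [code s] is a stack of bits; [pop] and [push] act on its top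
   [head s], using [B] for the bit and [T] as scratch. *)
Definition pop c B T := pcat (clr T) (pcat (clr B) (pcat (dec c) (pcat (halve c T B) (mv T c)))).
Definition push c B T := pcat (clr T) (pcat (dbl c T) (pcat (inc T) (pcat (mv B T) (mv T c)))).

Lemma wf_pop c B T : wf (pop c B T). Proof. rewrite /pop; wf_auto. Qed.
Lemma wf_push c B T : wf (push c B T). Proof. rewrite /push; wf_auto. Qed.

Lemma exec_pop c B T x : uniq [:: c; B; T; zreg] -> x zreg = 0 ->
  exec (pop c B T) x (upd (upd (upd x T 0) B (odd (x c).-1)) c ((x c).-1./2)).
Proof.
move=> hc hz; split_uniq; rewrite /pop.
exec_seq exec_clr; exec_seq exec_clr; exec_seq exec_dec; exec_seq exec_halve.
by exec_last exec_mv; upd_funext.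
Qed.

Lemma exec_push c B T x : uniq [:: c; B; T; zreg] -> x zreg = 0 ->
  exec (push c B T) x (upd (upd (upd x T 0) B 0) c ((x c).*2 + 1 + x B)).
Proof.
move=> hc hz; split_uniq; rewrite /push.
exec_seq exec_clr; exec_seq exec_dbl; exec_seq exec_inc; exec_seq exec_mv.
by exec_last exec_mv; upd_funext.
Qed.

#[global] Hint Resolve wf_pop wf_push : wfdb.

Definition revapp src dst B T :=
  pcat (clr B) (pcat (clr T) (while src (pcat (pop src B T) (push dst B T)))).

Lemma wf_revapp src dst B T : wf (revapp src dst B T).
Proof. rewrite /revapp; wf_auto. Qed.
#[global] Hint Resolve wf_revapp : wfdb.

Lemma exec_revapp src dst B T x s d : uniq [:: src; dst; B; T; zreg] ->
  x zreg = 0 -> x src = code s -> x dst = code d ->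
  exec (revapp src dst B T) x (upd (upd (upd (upd x B 0) T 0) src 0) dst (code (catrev s d))).
Proof.
move=> hu hz hs hd; split_uniq; rewrite /revapp.
exec_seq exec_clr; exec_seq exec_clr.
pose S a c := upd (upd (upd (upd x B 0) T 0) src a) dst c.
have := @while_rule src (pcat (pop src B T) (push dst B T))
  (fun m y => exists s1 d1, m = size s1 /\ catrev s1 d1 = catrev s d /\ y = S (code s1) (code d1))
  ltac:(wf_auto) ltac:(neq_side) _ (size s) (S (code s) (code d)) _ _.
case.
- move=> n y [[|b s1] [d1 [-> [hc ->]]]] hyz hne.
    by move: hne; rewrite /S upd_neq // upd_eq.
  exists (size s1), (S (code s1) (code (b :: d1))); split=> //.
  split; first by exists s1, (b :: d1).
  split; first by rewrite /S; upd_side.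
  eapply exec_pcat; [wf_auto | eapply exec_pop; rewrite ?/S; upd_side |].
  by eapply exec_eq; [eapply exec_push; rewrite ?/S; upd_side |]; rewrite /S; upd_funext_simpl.
- by exists s, d.
- by rewrite /S; upd_side.
- move=> m [y [[s1 [d1 [_ [hc ->]]]] [+ [_]]]].
  rewrite /S upd_neq ?upd_eq // => /eqP; rewrite code_eq0 => /eqP hs1.
  move: hc; rewrite hs1 /= => -> hex.
  have E : S (code s) (code d) = upd (upd x B 0) T 0 by rewrite /S; upd_funext_simpl.
  by rewrite -E; apply: (exec_eq hex); rewrite /S; upd_funext_simpl.
Qed.

Definition revtake N src dst B T :=
  pcat (clr B) (pcat (clr T) (while N (pcat (dec N) (pcat (pop src B T) (push dst B T))))).

Lemma wf_revtake N src dst B T : wf (revtake N src dst B T).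
Proof. rewrite /revtake; wf_auto. Qed.
#[global] Hint Resolve wf_revtake : wfdb.

Lemma exec_revtake N src dst B T x k s d : uniq [:: N; src; dst; B; T; zreg] ->
  x zreg = 0 -> x N = k -> k <= size s -> x src = code s -> x dst = code d ->
  exec (revtake N src dst B T) x
    (upd (upd (upd (upd (upd x B 0) T 0) N 0) src (code (drop k s)))
       dst (code (catrev (take k s) d))).
Proof.
move=> hu hz hk hks hs hd; split_uniq; rewrite /revtake.
exec_seq exec_clr; exec_seq exec_clr.
pose S n a c := upd (upd (upd (upd (upd x B 0) T 0) N n) src a) dst c.
have := @while_rule N (pcat (dec N) (pcat (pop src B T) (push dst B T)))
  (fun m y => m <= k /\ y = S m (code (drop (k - m) s)) (code (catrev (take (k - m) s) d)))
  ltac:(wf_auto) ltac:(neq_side) _ k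
  (S k (code (drop (k - k) s)) (code (catrev (take (k - k) s) d))) _ _.
case.
- move=> n y [hn ->] hyz hne.
  have hn0 : 0 < n by move: hne; rewrite /S upd_neq // upd_neq // upd_eq; case: (n).
  have hlt : k - n < size s by clear -hn hn0 hks; lia.
  exists n.-1, (S n.-1 (code (drop (k - n.-1) s)) (code (catrev (take (k - n.-1) s) d))).
  split; first by clear -hn0; lia.
  split; first by split; [clear -hn; lia | done].
  split; first by rewrite /S; upd_side.
  have -> : k - n.-1 = (k - n).+1 by clear -hn hn0 hks; lia.
  rewrite (drop_nth false hlt) (take_nth false hlt) catrev_rcons.
  exec_seq exec_dec.
  eapply exec_pcat; [wf_auto | eapply exec_pop; rewrite ?/S; upd_side |].
  by eapply exec_eq; [eapply exec_push; rewrite ?/S; upd_side |]; rewrite /S; upd_funext_simpl.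
- by rewrite subnn.
- by rewrite /S; upd_side.
- move=> m [y [[hm ->] [hy0 [_]]]].
  have -> : m = 0 by move: hy0; rewrite /S upd_neq // upd_neq // upd_eq.
  rewrite subn0 subnn drop0 take0 /= => hex.
  have E : S k (code s) (code d) = upd (upd x B 0) T 0 by rewrite /S; upd_funext_simpl.
  by rewrite -E; apply: (exec_eq hex); rewrite /S; upd_funext_simpl.
Qed.

(* [FL] is the loop flag, cleared once the [false] ending the unary prefix is read. *)
Definition count_ones K FL src B T :=
  pcat (clr B) (pcat (clr T) (pcat (clr K) (pcat (clr FL) (pcat (inc FL)
    (while FL (pcat (dec FL) (pcat (pop src B T) (mv2 B K FL)))))))).

Lemma wf_count_ones K FL src B T : wf (count_ones K FL src B T).
Proof. rewrite /count_ones; wf_auto. Qed.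
#[global] Hint Resolve wf_count_ones : wfdb.

Lemma exec_count_ones K FL src B T x k s : uniq [:: K; FL; src; B; T; zreg] ->
  x zreg = 0 -> x src = code (nseq k true ++ false :: s) ->
  exec (count_ones K FL src B T) x
    (upd (upd (upd (upd (upd x B 0) T 0) K k) FL 0) src (code s)).
Proof.
move=> hu hz hs; split_uniq; rewrite /count_ones.
exec_seq exec_clr; exec_seq exec_clr; exec_seq exec_clr; exec_seq exec_clr; exec_seq exec_inc.
pose S kk fl c := upd (upd (upd (upd (upd x B 0) T 0) K kk) FL fl) src c.
have := @while_rule FL (pcat (dec FL) (pcat (pop src B T) (mv2 B K FL)))
  (fun m y => (exists j, m = j.+1 /\ j <= k /\
                 y = S (k - j) 1 (code (nseq j true ++ false :: s)))
              \/ (m = 0 /\ y = S k 0 (code s)))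
  ltac:(wf_auto) ltac:(neq_side) _ k.+1
  (S (k - k) 1 (code (nseq k true ++ false :: s))) _ _.
case.
- move=> n y [[j [-> [hj ->]]]|[-> ->]] hyz hne; last first.
    by move: hne; rewrite /S upd_neq // upd_eq.
  case: j hj hyz hne => [|j] hj hyz hne.
  + exists 0, (S k 0 (code s)); split=> //; split; first by right.
    split; first by rewrite /S; upd_side.
    exec_seq exec_dec; rewrite /=.
    eapply exec_pcat; [wf_auto | eapply exec_pop; rewrite ?/S; upd_side |].
    by eapply exec_eq; [eapply exec_mv2; rewrite ?/S; upd_side |]; rewrite /S; upd_funext_simpl.
  + exists j.+1, (S (k - j) 1 (code (nseq j true ++ false :: s))); split=> //.
    split; first by left; exists j; do 2 (split=> //); clear -hj; lia.
    split; first by rewrite /S; upd_side.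
    exec_seq exec_dec; rewrite /=.
    eapply exec_pcat; [wf_auto | eapply exec_pop; rewrite ?/S; upd_side |].
    eapply exec_eq; [eapply exec_mv2; rewrite ?/S; upd_side |]; rewrite /S.
    by upd_funext_simpl; clear -hj; lia.
- by left; exists k.
- by rewrite /S; upd_side.
- move=> m [y [[[j [_ [_ ->]]]|[_ ->]] [hy0 [_ hex]]]].
    by move: hy0; rewrite /S upd_neq // upd_eq.
  have E : S (k - k) 1 (code (nseq k true ++ false :: s)) =
    upd (upd (upd (upd (upd x B 0) T 0) K 0) FL 0) FL
      ((upd (upd (upd (upd x B 0) T 0) K 0) FL 0) FL).+1 by rewrite /S subnn; upd_funext_simpl.
  by rewrite -E; apply: (exec_eq hex); rewrite /S; upd_funext_simpl.
Qed.

Definition takep N src dst ACC B T :=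
  pcat (clr ACC) (pcat (revtake N src ACC B T) (pcat (clr dst) (revapp ACC dst B T))).

Lemma wf_takep N src dst ACC B T : wf (takep N src dst ACC B T).
Proof. rewrite /takep; wf_auto. Qed.
#[global] Hint Resolve wf_takep : wfdb.

Lemma exec_takep N src dst ACC B T x k s : uniq [:: N; src; dst; ACC; B; T; zreg] ->
  x zreg = 0 -> x N = k -> k <= size s -> x src = code s ->
  exec (takep N src dst ACC B T) x
    (upd (upd (upd (upd (upd (upd x ACC 0) B 0) T 0) N 0) src (code (drop k s)))
       dst (code (take k s))).
Proof.
move=> hu hz hk hks hs; split_uniq; rewrite /takep.
exec_seq exec_clr.
exec_seq (@exec_revtake _ _ _ _ _ _ k s [::]).
exec_seq exec_clr.
exec_last (@exec_revapp _ _ _ _ _ (catrev (take k s) [::]) [::]).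
by rewrite !catrevE !cats0 seq.revK; upd_funext_simpl.
Qed.

(** * Self-delimiting codes of numbers *)

(* [nat_bits m] is the bit string [s] with [code s = m]; [bits_rec] carries fuel. *)
Fixpoint bits_rec f m : seq bool :=
  match f with
  | 0 => [::]
  | f'.+1 => if m is m'.+1 then odd m' :: bits_rec f' m'./2 else [::]
  end.
Definition nat_bits m := bits_rec m m.

Lemma code_bits_rec f m : m <= f -> code (bits_rec f m) = m.
Proof.
elim: f m => [|f IH] [|m] //= hm; have := odd_double_half m; rewrite -!muln2 => hm2.
by rewrite IH; rewrite -?muln2; lia.
Qed.

Lemma code_nat_bits m : code (nat_bits m) = m.
Proof. exact: code_bits_rec. Qed.

Definition sd_code m := nseq (size (nat_bits m)) true ++ false :: nat_bits m.

Definition parse target K FL ACC src B T :=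
  pcat (count_ones K FL src B T) (takep K src target ACC B T).

Lemma wf_parse target K FL ACC src B T : wf (parse target K FL ACC src B T).
Proof. rewrite /parse; wf_auto. Qed.
#[global] Hint Resolve wf_parse : wfdb.

Lemma exec_parse target K FL ACC src B T x m r :
  uniq [:: target; K; FL; ACC; src; B; T; zreg] ->
  x zreg = 0 -> x src = code (sd_code m ++ r) ->
  exec (parse target K FL ACC src B T) x
    (upd (upd (upd (upd (upd (upd (upd x B 0) T 0) K 0) FL 0) ACC 0) src (code r)) target m).
Proof.
move=> hu hz hx; split_uniq; rewrite /parse.
exec_seq (@exec_count_ones _ _ _ _ _ _ (size (nat_bits m)) (nat_bits m ++ r)).
  by rewrite hx /sd_code -catA.
exec_last (@exec_takep _ _ _ _ _ _ _ (size (nat_bits m)) (nat_bits m ++ r)).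
  by rewrite size_cat leq_addr.
by rewrite take_size_cat // drop_size_cat // code_nat_bits; upd_funext_simpl.
Qed.

(** * Running [u] on a block of registers *)

(* [reloc o u] is [u] acting on registers [o, o + 1, ...]; jumps past the end are
   redirected to the end so that the relocated program is well formed. *)
Definition reloc_instr o n (i : instr) :=
  match i with INC k => INC (k + o) | DEC k j => DEC (k + o) (minn j n) end.
Definition reloc o (u : program) := map (reloc_instr o (size u)) u.

Lemma size_reloc o u : size (reloc o u) = size u.
Proof. by rewrite size_map. Qed.

Lemma wf_reloc o u : wf (reloc o u).
Proof.
by rewrite /wf size_reloc; apply/allP => i /mapP [[k|k j] _ ->] //=; apply: geq_minr.
Qed.

Lemma step_reloc o u pc r X : pc < size u -> (forall k, r k = X (k + o)) ->
  exists X1, step (reloc o u) (pc, X) = (minn (step u (pc, r)).1 (size u), X1) /\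
             forall k, (step u (pc, r)).2 k = X1 (k + o).
Proof.
move=> hpc hX; rewrite /step (nth_map (INC 0)) //.
have upd_reloc k v : forall k', upd r k v k' = upd X (k + o) v (k' + o).
  by move=> k'; rewrite /upd eqn_add2r; case: eqP => _; rewrite ?hX.
case: (nth (INC 0) u pc) => [k|k j] /=.
  exists (upd X (k + o) (X (k + o)).+1); rewrite hX; split=> //.
  by congr pair; apply/esym/minn_idPl.
rewrite -hX; case: (r k) => [|n] /=; first by exists X.
exists (upd X (k + o) n); split=> //.
by congr pair; apply/esym/minn_idPl.
Qed.

Lemma reach_reloc o u s s' : reach u s s' -> size u <= s'.1 ->
  forall X, (forall k, s.2 k = X (k + o)) ->
  exists X', reach (reloc o u) (minn s.1 (size u), X) (size u, X') /\
             forall k, s'.2 k = X' (k + o).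
Proof.
elim=> [[pc r]|[pc r] s1 /= hlt _ IH] /= hs X hX.
  by exists X; rewrite (minn_idPr hs); split=> //; apply: reach_refl.
have [X1 [st hX1]] := step_reloc hlt hX.
have [X' [hr hX']] := IH hs X1 hX1.
exists X'; split=> //; rewrite (minn_idPl (ltnW hlt)).
by apply: reach_step; rewrite ?size_reloc ?st.
Qed.

Definition instr_reg (i : instr) := match i with INC k => k | DEC k _ => k end.
Definition reg_bound (u : program) := foldr (fun i m => maxn (instr_reg i).+1 m) 0 u.

Lemma instr_reg_bound u i : i \in u -> instr_reg i < reg_bound u.
Proof.
elim: u => //= i' u IH; rewrite inE leq_max => /orP [/eqP ->|/IH ->].
  by rewrite leqnn.
by rewrite orbT.
Qed.

Lemma mods_reloc o u z : 2 <= o -> z \in mods (reloc o u) -> o <= z < o + reg_bound u.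
Proof.
move=> ho /flattenP [l /mapP [i /mapP [i' hi' ->] ->] hz].
have := instr_reg_bound hi'; case: i' hi' hz => [k|k j] _ /=.
  by rewrite inE => /eqP -> h; lia.
have -> : (k + o == 1) = false by apply/negbTE; lia.
by rewrite inE => /eqP -> h; lia.
Qed.

Lemma exec_reloc o u p v X : outputs u p v -> X o = code p ->
  (forall k, 0 < k -> X (k + o) = 0) ->
  exists X', exec (reloc o u) X X' /\ X' o = code v.
Proof.
move=> /outputs_exec [y [[pc [hr hs]] hy]] hXo hX0.
have hX k : (init p).2 k = X (k + o) by case: k => [|k] /=; rewrite ?hXo ?hX0.
have [X' [hr' hX']] := @reach_reloc o u _ _ hr hs X hX.
exists X'; split; last by rewrite -hy; move: (hX' 0); rewrite /= add0n.
by exists (size u); rewrite size_reloc; split=> //; rewrite /= min0n in hr'.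
Qed.

Lemma exec_reloc_frame o u x y z : 2 <= o -> exec (reloc o u) x y -> x zreg = 0 ->
  z < o \/ o + reg_bound u <= z -> y z = x z.
Proof.
move=> ho he hz hzr; apply: (exec_frame he hz); apply/negP => /(mods_reloc ho); lia.
Qed.

(** * A machine joining two outputs of [u] *)

(* Register layout: 0 input/output, 1 [zreg], 2 and 3 scratch for [pop]/[push],
   4, 5, 6 scratch for [parse]/[takep], 7 the rotation [n], 8 the length [|p|],
   9 to 12 temporaries, and [u] runs on the block starting at 13 (on [p]) and on
   the block starting at [second_base u] (on [q]). *)

Definition read_input :=
  pcat (parse 7 4 5 6 0 2 3) (pcat (parse 8 4 5 6 0 2 3) (pcat (takep 8 0 9 6 2 3) (mv 9 13))).

Lemma wf_read_input : wf read_input.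
Proof. rewrite /read_input; wf_auto. Qed.

Lemma exec_read_input x n p q : x zreg = 0 ->
  x 0 = code (sd_code n ++ sd_code (size p) ++ p ++ q) ->
  exists y, exec read_input x y /\ y 7 = n /\ y 13 = x 13 + code p /\ y 0 = code q /\
    (forall z, 13 < z -> y z = x z) /\ y zreg = 0.
Proof.
move=> hz hx; eexists; split.
  exec_seq (@exec_parse _ _ _ _ _ _ _ _ n (sd_code (size p) ++ p ++ q)).
  exec_seq (@exec_parse _ _ _ _ _ _ _ _ (size p) (p ++ q)).
  exec_seq (@exec_takep _ _ _ _ _ _ _ (size p) (p ++ q)).
    by rewrite size_cat leq_addr.
  by eapply exec_mv; upd_side.
rewrite take_size_cat // drop_size_cat // /upd /= addnC.
by do 3 (split=> //); split=> // z hz13; repeat (case: eqP => ?); try lia.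
Qed.

Ltac neq_below o n :=
  match n with 0 => idtac | S ?k => assert (o != k) by lia; neq_below o k end.

Definition rotate_output o :=
  pcat (clr 10) (pcat (mv 13 10) (pcat (clr 11) (pcat (mv o 11)
  (pcat (clr 6) (pcat (revapp 10 6 2 3) (pcat (revapp 6 11 2 3)
  (pcat (takep 7 11 12 6 2 3)
  (pcat (clr 6) (pcat (revapp 11 6 2 3) (pcat (revapp 6 12 2 3)
  (pcat (clr 0) (mv 12 0)))))))))))).

Lemma exec_rotate_output o y v1 v2 n : 13 < o -> y zreg = 0 ->
  y 13 = code v1 -> y o = code v2 -> y 7 = n -> n <= size (v1 ++ v2) ->
  exists y', exec (rotate_output o) y y' /\ y' 0 = code (rot n (v1 ++ v2)).
Proof.
move=> ho hz h1 h2 hn hle; neq_below o 14.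
eexists; split.
  exec_seq exec_clr. exec_seq exec_mv. exec_seq exec_clr. exec_seq exec_mv. exec_seq exec_clr.
  exec_seq (@exec_revapp _ _ _ _ _ v1 [::]).
  exec_seq (@exec_revapp _ _ _ _ _ (catrev v1 [::]) v2).
  exec_seq (@exec_takep _ _ _ _ _ _ _ n (v1 ++ v2)).
  exec_seq exec_clr.
  exec_seq (@exec_revapp _ _ _ _ _ (drop n (v1 ++ v2)) [::]).
  exec_seq (@exec_revapp _ _ _ _ _ (catrev (drop n (v1 ++ v2)) [::]) (take n (v1 ++ v2))).
  exec_seq exec_clr.
  by eapply exec_mv; upd_side.
by rewrite /upd /= !catrevE !cats0 seq.revK /rot.
Qed.

Definition second_base u := 14 + reg_bound u.

Definition pair_machine u :=
  pcat (pcat read_input (reloc 13 u))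
    (pcat (pcat (mv 0 (second_base u)) (reloc (second_base u) u)) (rotate_output (second_base u))).

Lemma exec_run_first u p q v1 n : outputs u p v1 ->
  exists y, exec (pcat read_input (reloc 13 u)) (init (sd_code n ++ sd_code (size p) ++ p ++ q)).2 y
    /\ y 7 = n /\ y 13 = code v1 /\ y 0 = code q /\ y zreg = 0 /\
    forall z, second_base u <= z -> y z = 0.
Proof.
move=> hp; set x0 := (init _).2.
have hx0 z : z != 0 -> x0 z = 0 by rewrite /x0 /= => /negbTE ->.
have [y1 [e1 [h17 [h113 [h10 [h1f h1z]]]]]] := @exec_read_input x0 n p q (hx0 1 isT) erefl.
rewrite hx0 // add0n in h113.
have [y2 [e2 h213]] := @exec_reloc 13 u p v1 y1 hp h113
  ltac:(by move=> k hk; rewrite h1f ?hx0 //; lia).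
have frame z : z < 13 \/ 13 + reg_bound u <= z -> y2 z = y1 z by apply: exec_reloc_frame e2 h1z.
exists y2; split; first exact: exec_pcat wf_read_input e1 e2.
split; first by rewrite frame; [exact: h17 | left].
split=> //; split; first by rewrite frame; [exact: h10 | left].
split; first by rewrite frame; [exact: h1z | left].
move=> z; rewrite /second_base => hz; rewrite frame; last by right; lia.
rewrite h1f; last lia.
by apply: hx0; lia.
Qed.

Lemma exec_run_second u q v2 y : outputs u q v2 -> y 0 = code q -> y zreg = 0 ->
  (forall z, second_base u <= z -> y z = 0) ->
  exists y', exec (pcat (mv 0 (second_base u)) (reloc (second_base u) u)) y y' /\
    y' (second_base u) = code v2 /\ y' zreg = 0 /\ forall z, 1 < z < second_base u -> y' z = y z.
Proof.
rewrite /second_base => hq hy0 hz hyf; set o := 14 + reg_bound u.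
set y3 := upd (upd y o (y o + y 0)) 0 0.
have e3 : exec (mv 0 o) y y3 by apply: exec_mv => //; rewrite /= !inE /o; lia.
have h3o : y3 o = code q by rewrite /y3 /upd eqxx hyf ?hy0 //; rewrite /o; lia.
have h30 k : 0 < k -> y3 (k + o) = 0.
  by move=> hk; rewrite /y3 /upd /o; do 2 (case: eqP => ?; try lia); rewrite hyf; lia.
have [y4 [e4 h4o]] := @exec_reloc o u q v2 y3 hq h3o h30.
have h3z : y3 zreg = 0 by rewrite /y3 !upd_neq //; rewrite /o; lia.
have frame z : z < o -> y4 z = y3 z by move=> hz'; apply: exec_reloc_frame e4 h3z _; lia.
exists y4; split; first exact: exec_pcat (wf_mv _ _) e3 e4.
split=> //; split; first by rewrite frame ?h3z //; rewrite /o; lia.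
move=> z /andP [hz1 hz2]; rewrite frame // /y3 !upd_neq //; lia.
Qed.

Lemma outputs_pair_machine u p q v1 v2 n :
  outputs u p v1 -> outputs u q v2 -> n <= size (v1 ++ v2) ->
  outputs (pair_machine u) (sd_code n ++ sd_code (size p) ++ p ++ q) (rot n (v1 ++ v2)).
Proof.
move=> hp hq hn.
have [y1 [e1 [h17 [h113 [h10 [h1z h1f]]]]]] := exec_run_first q n hp.
have [y2 [e2 [h2o [h2z h2f]]]] := exec_run_second hq h10 h1z h1f.
have [|||y3 [e3 h30]] := @exec_rotate_output (second_base u) y2 v1 v2 n _ h2z _ h2o _ hn.
- by rewrite /second_base; lia.
- by rewrite h2f // /second_base; lia.
- by rewrite h2f // /second_base; lia.
apply: (exec_outputs _ h30); apply: exec_pcat e1 _.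
  exact: wf_pcat wf_read_input (wf_reloc _ _).
exact: exec_pcat (wf_pcat (wf_mv _ _) (wf_reloc _ _)) e2 e3.
Qed.

(** * Complexity of concatenations *)

Lemma outputs_nil w : outputs [::] w w.
Proof. by exists 0, (init w).2. Qed.

Lemma ex_least (Q : nat -> Prop) :
  (exists n, Q n) -> exists n, Q n /\ forall m, Q m -> n <= m.
Proof.
move=> [n hn]; elim/ltn_ind: n hn => n IH hn.
case: (classic (exists m, Q m /\ m < n)) => [[m [hm hmn]]|hmin]; first exact: IH hm.
by exists n; split=> // m hm; rewrite leqNgt; apply/negP => hmn; apply: hmin; exists m.
Qed.

Lemma code_size s : 2 ^ size s <= (code s).+1.
Proof. by elim: s => //= b s IH; rewrite expnS; case: b => /=; rewrite -!muln2; lia. Qed.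

Lemma size_nat_bits m : size (nat_bits m) <= trunc_log 2 m.+1.
Proof. by apply: trunc_log_max => //; rewrite -{2}(code_nat_bits m) code_size. Qed.

Lemma size_sd_code m N : m < N -> size (sd_code m) <= (trunc_log 2 N).*2.+1.
Proof.
move=> hmN; have := leq_trunc_log 2 hmN; have := size_nat_bits m.
by rewrite /sd_code size_cat size_nseq /= -!muln2; lia.
Qed.

Definition log_slack C n := C * (trunc_log 2 (n + C)).+1.

Lemma log_slack_mono C C' n n' : C <= C' -> n <= n' -> log_slack C n <= log_slack C' n'.
Proof.
move=> hC hn; apply: leq_mul => //; rewrite ltnS; apply: leq_trunc_log; lia.
Qed.

Section UniversalMachine.
Variable u : program.
Hypothesis hu : universal u.

Lemma K_spec v : (exists q, outputs u q v /\ size q = K u v) /\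
                 (forall q, outputs u q v -> K u v <= size q).
Proof.
pose P n := (exists q, outputs u q v /\ size q = n) /\ (forall q, outputs u q v -> n <= size q).
apply: (epsilon_spec (inhabits 0%N) P).
have [c hc] := hu [::]; have [q [hq _]] := hc v v (outputs_nil v).
have [n [[q' hq'] hmin]] := @ex_least (fun n => exists q, outputs u q v /\ size q = n)
  (ex_intro _ _ (ex_intro _ q (conj hq erefl))).
by exists n; split; [exists q' | move=> q0 h0; apply: hmin; exists q0].
Qed.

Lemma K_le_size v q : outputs u q v -> K u v <= size q.
Proof. exact: (K_spec v).2. Qed.

Lemma K_shortest v : exists q, outputs u q v /\ size q = K u v.
Proof. exact: (K_spec v).1. Qed.

Lemma K_le_length : exists c, forall v, K u v <= size v + c.
Proof.
have [c hc] := hu [::]; exists c => v.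
by have [q [hq hs]] := hc v v (outputs_nil v); apply: leq_trans (K_le_size hq) hs.
Qed.

Lemma K_rot_cat : exists c, forall p q v1 v2 n,
  outputs u p v1 -> outputs u q v2 -> n <= size (v1 ++ v2) ->
  K u (rot n (v1 ++ v2)) <= size (sd_code n) + size (sd_code (size p)) + size p + size q + c.
Proof.
have [c hc] := hu (pair_machine u); exists c => p q v1 v2 n hp hq hn.
have [q' [hq' hs]] := hc _ _ (outputs_pair_machine hp hq hn).
by apply: leq_trans (K_le_size hq') _; move: hs; rewrite !size_cat; lia.
Qed.

(* [t ++ s] is [rot (size s) (s ++ t)], printed by the pair machine with [q] a
   shortest program for the empty string. *)
Lemma K_cat_bounds : exists C, forall s t,
  K u (s ++ t) <= K u s + K u t + log_slack C (size s + size t) /\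
  K u (t ++ s) <= K u (s ++ t) + log_slack C (size s + size t).
Proof.
have [cI hI] := K_le_length; have [cR hR] := K_rot_cat.
set C := cI + cR + K u [::] + 10; exists C => s t.
rewrite /log_slack; set L := trunc_log 2 (size s + size t + C).
have hCL : C * L.+1 = C * L + C by rewrite mulnS addnC.
have hL : L <= C * L by rewrite leq_pmull // /C; lia.
split.
- have [p [hp hps]] := K_shortest s; have [q [hq hqs]] := K_shortest t.
  have := hR p q s t 0 hp hq (leq0n _); rewrite rot0 hps hqs => hst.
  have hsK : size (sd_code (K u s)) <= L.*2.+1 by apply: size_sd_code; have := hI s; lia.
  by move: hst hsK hCL hL; rewrite /C -!muln2 /=; lia.
- have [p [hp hps]] := K_shortest (s ++ t); have [q [hq hqs]] := K_shortest [::].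
  have := hR p q (s ++ t) [::] (size s) hp hq ltac:(rewrite !size_cat; lia).
  rewrite cats0 rot_size_cat hps hqs => hts.
  have hs : size (sd_code (size s)) <= L.*2.+1 by apply: size_sd_code; lia.
  have hsK : size (sd_code (K u (s ++ t))) <= L.*2.+1.
    by apply: size_sd_code; have := hI (s ++ t); rewrite size_cat; lia.
  by move: hts hs hsK hCL hL; rewrite /C -!muln2; lia.
Qed.

End UniversalMachine.

(** * Prefixes of independent sequences *)

Lemma size_xpref z n : size (xpref z n) = n.
Proof. exact: size_mkseq. Qed.

Lemma K_cat_nil_defect u s t : s = [::] \/ t = [::] ->
  K u (s ++ t) <= K u s + K u t /\ K u s + K u t <= K u (s ++ t) + K u [::].
Proof. by case=> ->; rewrite ?cats0 /=; lia. Qed.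

(* The lower bound for [x(1:n) y(1:m)] is independence; the one for [y(1:m) x(1:n)]
   goes through rotation. *)
Lemma independent_K_cat u x y : universal u -> independent u x y ->
  exists c, forall n m, let s := xpref x n in let t := xpref y m in
    [/\ K u (s ++ t) <= K u s + K u t + log_slack c (n + m),
        K u s + K u t <= K u (s ++ t) + log_slack c (n + m),
        K u (t ++ s) <= K u t + K u s + log_slack c (n + m) &
        K u t + K u s <= K u (t ++ s) + log_slack c (n + m)].
Proof.
move=> hu [c0 hc0]; have [C hC] := K_cat_bounds hu.
exists (C + 2 * c0 + K u [::]) => n m s t.
have hslack : log_slack C (n + m) <= log_slack (C + 2 * c0 + K u [::]) (n + m).
  by apply: log_slack_mono; lia.
have [hst hts] := hC s t; have [hts' hst'] := hC t s.
rewrite !size_xpref in hst hts hts' hst'; rewrite [m + n]addnC in hts' hst'.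
have hK0 : K u [::] <= log_slack (C + 2 * c0 + K u [::]) (n + m).
  by rewrite /log_slack; apply: leq_trans (leq_pmulr _ (ltn0Sn _)); lia.
have [hn0|hn0] := posnP n; last have [hm0|hm0] := posnP m.
- have [h1 h2] := @K_cat_nil_defect u s t (or_introl (congr1 (xpref x) hn0)).
  have [h3 h4] := @K_cat_nil_defect u t s (or_intror (congr1 (xpref x) hn0)).
  by split; lia.
- have [h1 h2] := @K_cat_nil_defect u s t (or_intror (congr1 (xpref y) hm0)).
  have [h3 h4] := @K_cat_nil_defect u t s (or_introl (congr1 (xpref y) hm0)).
  by split; lia.
have hind : K u s + K u t <= K u (s ++ t) + c0 * (1 + trunc_log 2 n + trunc_log 2 m).
  by have := hc0 n m hn0 hm0; rewrite -/s -/t; lia.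
have hlog : c0 * (1 + trunc_log 2 n + trunc_log 2 m) + log_slack C (n + m)
            <= log_slack (C + 2 * c0 + K u [::]) (n + m).
  set L := trunc_log 2 (n + m + (C + 2 * c0 + K u [::])).
  have hn : trunc_log 2 n <= L by apply: leq_trunc_log; lia.
  have hm : trunc_log 2 m <= L by apply: leq_trunc_log; lia.
  have hLC : trunc_log 2 (n + m + C) <= L by apply: leq_trunc_log; lia.
  have h1 : C * (trunc_log 2 (n + m + C)).+1 <= C * L.+1 by rewrite leq_mul2l ltnS hLC orbT.
  have h2 : c0 * (1 + trunc_log 2 n + trunc_log 2 m) <= c0 * (2 * L.+1).
    by rewrite leq_mul2l; apply/orP; right; lia.
  by rewrite /log_slack -/L; nia.
by split; lia.
Qed.

(** * Growth of the block lengths *)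

Lemma recurrence_le_expn (a b : nat) (t : nat -> nat) : t 1 = a ->
  (forall i, 2 <= i -> t i = b * \sum_(1 <= k < i) t k) ->
  forall i, 0 < i -> t i <= a * (b + 1) ^ i.
Proof.
move=> ht1 hti.
have hsum i : 0 < i -> \sum_(1 <= k < i.+1) t k <= a * (b + 1) ^ i.
  elim: i => // -[_ _|i IH _]; first by rewrite big_nat1 ht1 expn1 leq_pmulr // addn1.
  rewrite big_nat_recr //= (hti i.+2) // expnS mulnCA.
  by rewrite -{1}(mul1n (\sum_(_ <= _ < _) _)) -mulnDl addnC leq_mul2l IH ?orbT.
by move=> i hi; apply: leq_trans (hsum i hi); rewrite big_nat_recr //= leq_addl.
Qed.

Lemma trunc_log2_lt X k : 0 < X -> X < 2 ^ k -> trunc_log 2 X < k.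
Proof.
move=> hX hXk; have := leq_ltn_trans (trunc_logP (isT : 1 < 2) hX) hXk.
by rewrite ltn_exp2l.
Qed.

Lemma trunc_log2_mul_expn E F k : 0 < E -> 0 < F -> trunc_log 2 (E * F ^ k) < E + F * k.
Proof.
move=> hE hF; apply: trunc_log2_lt; first by rewrite muln_gt0 hE expn_gt0 hF.
have hFk : F ^ k <= 2 ^ (F * k).
  by rewrite expnM; case: k => // k; rewrite leq_exp2r // ltnW // ltn_expl.
apply: leq_ltn_trans (leq_mul (leqnn E) hFk) _.
by rewrite expnD ltn_pmul2r ?expn_gt0 // ltn_expl.
Qed.

Lemma log_slack_recurrence (a b c : nat) (t : nat -> nat) : 0 < a -> t 1 = a ->
  (forall i, 2 <= i -> t i = b * \sum_(1 <= k < i) t k) ->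
  exists d, forall i j, 0 < i -> 0 < j -> log_slack c (t i + t j) <= d * (i + j).
Proof.
move=> ha ht1 hti; pose E := 2 * a + c; pose F := b + 1.
exists (c * (E + F)) => i j hi hj; rewrite /log_slack -mulnA leq_mul2l; apply/orP; right.
have hF : F ^ i <= F ^ (i + j) /\ F ^ j <= F ^ (i + j) /\ 0 < F ^ (i + j).
  by rewrite !leq_pexp2l ?expn_gt0 /F ?addn1 //; lia.
have hti' := recurrence_le_expn ht1 hti hi; have htj := recurrence_le_expn ht1 hti hj.
have hsum : t i + t j + c <= E * F ^ (i + j).
  by case: hF => [h1 [h2 h3]]; rewrite /E /F in h1 h2 h3 *; nia.
have := trunc_log2_mul_expn (i + j) (_ : 0 < E) (_ : 0 < F).
rewrite /E /F; move: (leq_trunc_log 2 hsum); rewrite /E /F; nia.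
Qed.

Import Order.TTheory GRing.Theory Num.Theory.
Local Open Scope ring_scope.

Lemma normz_subn_le (A B D : nat) : (A <= B + D)%N -> (B <= A + D)%N ->
  `|A%:Z - B%:Z| <= D%:Z.
Proof. by move=> h1 h2; rewrite ler_norml; apply/andP; split; lia. Qed.

Theorem lemma4p5 (R : realType) (u : program) (hu : universal u)
  (x y : nat -> bool) (tau sigma sigma' : R) (a b : nat) (t : nat -> nat)
  (hxy : independent u x y)
  (htau : 0 < tau) (hx : has_rate u tau x) (hy : has_rate u tau y)
  (hsigma : 0 < sigma) (hsigmatau : sigma < tau)
  (hsigma' : 0 < sigma') (hsigma'tau : sigma' < tau - sigma)
  (hb : b%:Z = Num.ceil ((1 - sigma) / sigma'))
  (ha : (0 < a)%N)
  (ht0 : t 0%N = 0%N) (ht1 : t 1%N = a)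
  (hti : forall i : nat, (2 <= i)%N -> t i = (b * \sum_(1 <= k < i) t k)%N) :
  exists c : nat, forall i j : nat, (1 <= i)%N -> (1 <= j)%N ->
    `| (K u (xpref y (t i) ++ xpref x (t j)))%:Z
        - ((K u (xpref y (t i)))%:Z + (K u (xpref x (t j)))%:Z) |
      <= (c * (i + j))%:Z
    /\
    `| (K u (xpref x (t i) ++ xpref y (t j)))%:Z
        - ((K u (xpref x (t i)))%:Z + (K u (xpref y (t j)))%:Z) |
      <= (c * (i + j))%:Z.
Proof.
have [c hc] := independent_K_cat hu hxy.
have [d hd] := log_slack_recurrence c ha ht1 hti.
exists d => i j hi hj; have hdij := hd i j hi hj.
have [_ _ hyx1 hyx2] := hc (t j) (t i); rewrite [(t j + t i)%N]addnC in hyx1 hyx2.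
have [hxy1 hxy2 _ _] := hc (t i) (t j).
by rewrite -!PoszD; split; apply: normz_subn_le; lia.
Qed.
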